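(* Let $A=\{a,b,c\}$, $\Lambda=\{ab^ic\mid i\geq 1\}$ and $\mathcal{T}_2=\{((ab^ic)^2,\varepsilon)\mid i\ge 1\}$. If $w\in A^\ast$ is $\mathcal{T}_2$-irreducible and right invertible in $\Pi_2=\langle a,b,c\mid (ab^ic)^2=1\ (i\geq 1)\rangle$, then $w\in \mathrm{Pre}(\Lambda)^\ast$.
   Context: A word $w$ is $\mathcal{T}_2$-irreducible if it contains no factor of the form $(ab^ic)^2$ with $i\ge1$. $w$ is right invertible in $\Pi_2$ if there is $w'$ with $ww'=1$ in $\Pi_2$. $\mathrm{Pre}(\Lambda)$ denotes the set of non-empty prefixes of words in $\Lambda$, and $\mathrm{Pre}(\Lambda)^\ast$ the set of finite concatenations of such prefixes. *)

From mathcomp Require Import all_boot.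
From Stdlib Require Import Relation_Operators.
From Stdlib Require List.
Set Implicit Arguments. Unset Strict Implicit. Unset Printing Implicit Defensive.

Inductive letter : Type := La | Lb | Lc.

Definition word := seq letter.

Definition lam (i : nat) : word := La :: nseq i Lb ++ [:: Lc].

Definition relw (i : nat) : word := lam i ++ lam i.

Inductive T2step : word -> word -> Prop :=
| T2step_intro (u v : word) (i : nat) : 1 <= i -> T2step (u ++ relw i ++ v) (u ++ v).

(* Equality in the monoid Pi_2 = < a,b,c | (ab^ic)^2 = 1 (i >= 1) >:
   the congruence generated by the relations, i.e. the reflexive-symmetric-
   transitive closure of the (context-closed) rewriting step. *)
Definition Pi2_eq : word -> word -> Prop := clos_refl_sym_trans word T2step.

Definition T2_irreducible (w : word) : Prop :=
  ~ exists (u v : word) (i : nat), 1 <= i /\ w = u ++ relw i ++ v.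

Definition right_invertible (w : word) : Prop :=
  exists w' : word, Pi2_eq (w ++ w') [::].

Definition in_PreLambda (p : word) : Prop :=
  p <> [::] /\ exists i k : nat, 1 <= i /\ p = take k (lam i).

Definition in_PreLambda_star (w : word) : Prop :=
  exists ps : seq word, (forall p, List.In p ps -> in_PreLambda p) /\ w = flatten ps.

From mathcomp Require Import all_boot.
From Stdlib Require Import Relation_Operators.
From Stdlib Require List.

(* The rewriting system T_2 : (ab^ic)^2 -> empty is subcommutative:
   two one-step reducts of a word either coincide or have a common one-step
   reduct.  Indeed two occurrences of relators (ab^ic)^2 and (ab^jc)^2 can only
   overlap when i = j and the occurrences coincide or are shifted by a b^i c,
   and in both cases erasing either one gives the same word.  Hence T_2 is
   confluent and Church-Rosser, so w w' = 1 in Pi_2 means that w w' reduces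
   to the empty word.  Finally, follow such a reduction: each step erases a
   relator, which either lies to the right of the prefix w (so w survives), or
   would lie inside w (impossible, w is irreducible), or straddles the border,
   cutting w into a shorter prefix followed by a prefix of (ab^ic)^2, which is
   a product of at most two elements of Pre(Lambda). *)

Lemma cat_eq_cat (T : Type) (s1 s2 t1 t2 : seq T) : s1 ++ s2 = t1 ++ t2 ->
  (exists r, t1 = s1 ++ r /\ s2 = r ++ t2) \/
  (exists r, s1 = t1 ++ r /\ t2 = r ++ s2).
Proof.
elim: s1 t1 => [|x s1 IH] [|y t1] /=.
- by move=> ->; left; exists [::].
- by move=> ->; left; exists (y :: t1).
- by move=> <-; right; exists (x :: s1).
- by case=> -> /IH [[r [-> ->]]|[r [-> ->]]]; [left|right]; exists r.
Qed.

Lemma lam_prefix_inj (i j : nat) (x y : word) :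
  lam i ++ x = lam j ++ y -> i = j /\ x = y.
Proof.
rewrite /lam /= -!catA /=; case.
elim: i j => [|i IH] [|j] //=; first by case.
by case=> /IH [-> ->].
Qed.

Lemma bs_c_before_a (n : nat) (s t r : word) :
  nseq n Lb ++ Lc :: s = t ++ La :: r ->
  exists t', t = nseq n Lb ++ Lc :: t' /\ s = t' ++ La :: r.
Proof.
elim: n t => [|n IH] [|x t] //=.
- by case=> -> ->; exists t.
- by case=> <- /IH [t' [-> ->]]; exists t'.
Qed.

Lemma relw_a_position (i : nat) (t r : word) :
  relw i = t ++ La :: r -> t = [::] \/ t = lam i.
Proof.
rewrite /relw /lam /=; case: t => [|x t] /=; first by left.
case=> <-; rewrite -catA /= => /bs_c_before_a [t' [-> Hs]].
case: t' Hs => [|y t'] /=; first by right.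
by case=> _ /bs_c_before_a [t'' [/(congr1 size)]]; rewrite size_cat /=; case: t''.
Qed.

(* Overlap analysis: a relator occurring at offset size t inside relw i ++ v1
   either lies entirely after relw i, or erasing it gives the same word as
   erasing relw i. *)
Lemma relw_overlap (i j : nat) (t v1 v2 : word) :
  relw i ++ v1 = t ++ relw j ++ v2 ->
  (exists t', t = relw i ++ t' /\ v1 = t' ++ relw j ++ v2) \/ v1 = t ++ v2.
Proof.
case/cat_eq_cat=> [|[t' [Ei Ej]]]; first by left.
case: t' Ei Ej => [|y t'] Ei Ej.
  by rewrite cats0 in Ei; left; exists [::]; rewrite Ei cats0.
have Ey : y = La by move: Ej; rewrite /relw /lam; case.
subst y; right; case/relw_a_position: (Ei) => Et; subst t.
- move: Ej; rewrite /= in Ei; rewrite -Ei /relw -!catA.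
  by case/lam_prefix_inj=> _ /lam_prefix_inj [_ ->].
- move: Ei; rewrite /relw => /(congr1 (drop (size (lam i)))).
  rewrite !drop_size_cat // => Et'.
  by move: Ej; rewrite -Et' /relw -catA => /lam_prefix_inj [-> <-].
Qed.

Lemma T2step_diamond_ordered (u : word) {t v1 v2 : word} {i j : nat} :
  1 <= i -> 1 <= j -> relw i ++ v1 = t ++ relw j ++ v2 ->
  u ++ v1 = (u ++ t) ++ v2 \/
  exists z, T2step (u ++ v1) z /\ T2step ((u ++ t) ++ v2) z.
Proof.
move=> Hi Hj /relw_overlap [[t' [-> ->]]|->]; last by left; rewrite catA.
right; exists (u ++ t' ++ v2); split.
- by have := T2step_intro (u ++ t') v2 Hj; rewrite -!catA.
- by have := T2step_intro u (t' ++ v2) Hi; rewrite -!catA.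
Qed.

Lemma T2step_subcommutative (x y z : word) : T2step x y -> T2step x z ->
  y = z \/ exists m, T2step y m /\ T2step z m.
Proof.
case=> u1 v1 i Hi Hz; move Ex: (u1 ++ relw i ++ v1) Hz => x0 Hz.
case: Hz Ex => u2 v2 j Hj /cat_eq_cat [[t [-> Ht]]|[t [-> Ht]]].
- exact: (T2step_diamond_ordered u1 Hi Hj Ht).
- case: (T2step_diamond_ordered u2 Hj Hi Ht) => [->|[m [H1 H2]]]; first by left.
  by right; exists m.
Qed.

Section SubcommutativeChurchRosser.

Variables (T : Type) (R : T -> T -> Prop).
Hypothesis R_subcommutative : forall {x y z : T}, R x y -> R x z ->
  y = z \/ exists m, R y m /\ R z m.

Local Notation reduces := (clos_refl_trans_1n T R).

Lemma reduces_trans {x y z : T} : reduces x y -> reduces y z -> reduces x z.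
Proof.
by elim=> // a b c Hab _ IH /IH Hcz; apply: rt1n_trans Hab Hcz.
Qed.

Lemma strip {x y z : T} : R x y -> reduces x z ->
  exists m, reduces y m /\ (m = z \/ R z m).
Proof.
move=> Hxy Hxz; elim: Hxz y Hxy => [a|a b c Hab Hbc IH] y Hay.
  by exists y; split; [apply: rt1n_refl|right].
case: (R_subcommutative Hay Hab) => [->|[m [Hym Hbm]]].
  by exists c; split; [|left].
have [n [Hmn Hcn]] := IH m Hbm.
by exists n; split; first exact: rt1n_trans Hym Hmn.
Qed.

Lemma confluence {x y z : T} : reduces x y -> reduces x z ->
  exists m, reduces y m /\ reduces z m.
Proof.
move=> Hxy; elim: Hxy z => [a|a b c Hab _ IH] z Hz.
  by exists z; split; first exact: Hz; apply: rt1n_refl.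
have [m [Hbm Hzm]] := strip Hab Hz.
have [n [Hcn Hmn]] := IH m Hbm.
exists n; split=> //; case: Hzm => [<-|Hzm] //; exact: rt1n_trans Hzm Hmn.
Qed.

Lemma church_rosser (x y : T) : clos_refl_sym_trans T R x y ->
  exists m, reduces x m /\ reduces y m.
Proof.
elim=> [a b Hab|a|a b _ [m [H1 H2]]|a b c _ [m [H1 H2]] _ [n [H3 H4]]].
- by exists b; split; [apply: rt1n_trans Hab (rt1n_refl _ _ _)|apply: rt1n_refl].
- by exists a; split; apply: rt1n_refl.
- by exists m.
- have [k [H5 H6]] := confluence H2 H3.
  by exists k; split; [exact: reduces_trans H1 H5|exact: reduces_trans H4 H6].
Qed.

End SubcommutativeChurchRosser.

Arguments church_rosser {T R} R_subcommutative {x y}.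

Lemma reduces_from_nil (u : word) :
  clos_refl_trans_1n word T2step [::] u -> u = [::].
Proof.
case=> // y z Hy _; move Ee: [::] Hy => e Hy; case: Hy Ee => u0 v0 i _.
by case: u0.
Qed.

Lemma PreLambda_star_nil : in_PreLambda_star [::].
Proof. by exists [::]. Qed.

Lemma PreLambda_star_cat (u v : word) :
  in_PreLambda_star u -> in_PreLambda_star v -> in_PreLambda_star (u ++ v).
Proof.
case=> p [Hp ->] [q [Hq ->]]; exists (p ++ q); split; last by rewrite flatten_cat.
by move=> r /(List.in_app_or p q r) [/Hp|/Hq].
Qed.

Lemma PreLambda_star_take_lam (i k : nat) :
  1 <= i -> in_PreLambda_star (take k (lam i)).
Proof.
move=> Hi; case E: (take k (lam i)) => [|x s]; first exact: PreLambda_star_nil.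
exists [:: x :: s]; split; last by rewrite /= cats0.
by move=> p [<-|[]]; split=> //; exists i, k; rewrite E.
Qed.

Lemma PreLambda_star_take_relw (i k : nat) :
  1 <= i -> in_PreLambda_star (take k (relw i)).
Proof.
move=> Hi; rewrite /relw take_cat; case: ifP => _; first exact: PreLambda_star_take_lam.
apply: PreLambda_star_cat; last exact: PreLambda_star_take_lam.
by rewrite -(take_size (lam i)); apply: PreLambda_star_take_lam.
Qed.

Lemma T2_irreducible_prefix (u s : word) :
  T2_irreducible (u ++ s) -> T2_irreducible u.
Proof.
move=> Hus [x [y [i [Hi Eu]]]]; apply: Hus; exists x, (y ++ s), i; split=> //.
by rewrite Eu -!catA.
Qed.

Lemma irreducible_prefix_of_nullable {x : word} :
  clos_refl_trans_1n word T2step x [::] ->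
  forall w w', x = w ++ w' -> T2_irreducible w -> in_PreLambda_star w.
Proof.
move=> Hx; remember [::] as e eqn:Ee.
elim: Hx Ee => [a ->|a b c Hab _ IH /IH {}IH] w w' Ex Hw.
  by case: w Ex Hw => [|? ?] // _ _; exact: PreLambda_star_nil.
case: Hab Ex IH => u v i Hi Ex IH.
move/esym/cat_eq_cat: Ex => [[t [Hu _]]|[t [Hw_ut Ht]]].
  (* the relator lies to the right of w *)
  by apply: (IH w (t ++ v)) => //; rewrite Hu -catA.
case/cat_eq_cat: Ht => [[s [Hw' _]]|[s [Hrelw _]]].
  (* the relator would lie inside w *)
  by case: Hw; exists u, s, i; rewrite Hw_ut Hw'.
(* the relator straddles the end of w: w = u ++ (prefix of the relator) *)
rewrite Hw_ut in Hw *; apply: PreLambda_star_cat.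
  by apply: (IH u v) => //; exact: T2_irreducible_prefix Hw.
have -> : t = take (size t) (relw i) by rewrite Hrelw take_size_cat.
exact: PreLambda_star_take_relw.
Qed.

Theorem mainTheorem6 (w : word) :
  T2_irreducible w -> right_invertible w -> in_PreLambda_star w.
Proof.
move=> Hw [w' Hinv].
have [m [Hww' Hnil]] := church_rosser T2step_subcommutative Hinv.
move/reduces_from_nil: Hnil => Em; subst m.
exact: irreducible_prefix_of_nullable Hww' w w' (erefl _) Hw.
Qed.
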